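(* Consider the following optimisation problem. There are $J$ portfolios; portfolio $j$ has a set $\mathcal{I}_j$ of independent accounts with standard deviations $\sigma_i>0$ and a dependent block $\mathcal{D}_j$ of $|\mathcal{D}_j|$ accounts whose total has standard deviation $\sigma_{\mathcal{D},j}\ge0$ ($\sigma_{\mathcal{D},j}\sqrt{|\mathcal{D}_j|}=0$ if $\mathcal{D}_j=\emptyset$, in which case terms involving $r_j$ are absent). Given a budget $C>0$ and bounds $V_j>0$, minimise over positive reals $r_j$, $R_i$ ($i\in\mathcal{I}=\cup_j\mathcal{I}_j$) the objective $\sum_{j}\big(\sigma^2_{\mathcal{D},j}/r_j+\sum_{i\in\mathcal{I}_j}\sigma_i^2/R_i\big)$ subject to $\sum_jr_j|\mathcal{D}_j|+\sum_{i\in\mathcal{I}}R_i=C$ and $\operatorname{Var}(\hat\mu_j):=\sigma^2_{\mathcal{D},j}/r_j+\sum_{i\in\mathcal{I}_j}\sigma_i^2/R_i\le V_j$ for $j=1,\dots,J$. Let $\gamma_j=\sigma_{\mathcal{D},j}\sqrt{|\mathcal{D}_j|}+\sum_{i\in\mathcal{I}_j}\sigma_i$, $\epsilon_j=\gamma_j/V_j$, and for $\mathcal{B}\subseteq\{1,\dots,J\}$ let $\alpha(\mathcal{B})=\big(C-\sum_{j\in\mathcal{B}}\gamma_j\epsilon_j\big)/\sum_{j\notin\mathcal{B}}\gamma_j$, $e_j(\mathcal{B})=\epsilon_j$ for $j\in\mathcal{B}$ and $e_j(\mathcal{B})=\alpha(\mathcal{B})$ for $j\notin\mathcal{B}$,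 and let $\mathbf{R}^\ast(\mathcal{B})$ be the allocation $R_i=\sigma_ie_j(\mathcal{B})$ ($i\in\mathcal{I}_j$), $r_j=\frac{\sigma_{\mathcal{D},j}}{\sqrt{|\mathcal{D}_j|}}e_j(\mathcal{B})$. Algorithm 1: initialise $\mathcal{B}=\emptyset$; repeat: compute $\mathbf{R}^\ast(\mathcal{B})$, then for $j=1,\dots,J$, if $\operatorname{Var}(\hat\mu_j)>V_j$ under this allocation, add $j$ to $\mathcal{B}$; until a complete pass adds nothing to $\mathcal{B}$; return $\mathcal{B}$ and $\mathbf{R}^\ast(\mathcal{B})$. If Slater's condition $\sum_{j=1}^J\gamma_j\epsilon_j<C$ holds, then Algorithm 1 terminates and the returned allocation $\mathbf{R}^\ast(\mathcal{B})$ is a global minimiser of the optimisation problem.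
   Context: Slater's condition here is equivalent to the existence of a point satisfying the budget equality and all variance constraints strictly. $\mathbf{R}^\ast(\mathcal{B})$ is the solution of the stationarity (KKT) equations of the Lagrangian when the constraints indexed by $\mathcal{B}$ are active and the remaining ones have zero Lagrange multiplier. The $\sigma_i$, $\sigma_{\mathcal{D},j}$ are the true (known) variances. *)

From HB Require Import structures.
From mathcomp Require Import all_boot all_order all_algebra.
Set Implicit Arguments. Unset Strict Implicit. Unset Printing Implicit Defensive.
Import Order.TTheory GRing.Theory Num.Theory.
Local Open Scope ring_scope.

(* Problem data:
   - J portfolios, indexed by 'I_J;
   - A : finite type of independent accounts (the set I = U_j I_j), each
     account a belongs to portfolio  port a  (so I_j = {a | port a = j});
   - sig a  : standard deviation sigma_i of independent account a;
   - d j    : |D_j|, the size of the dependent block of portfolio j;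
   - sD j   : sigma_{D,j}, std. dev. of the total of the dependent block;
   - C      : budget;  V j : variance bound of portfolio j.
   An allocation is a pair (r, Rv) with r : 'I_J -> R (the r_j) and
   Rv : A -> R (the R_i).  When d j = 0 the variable r j is absent: it
   contributes neither to the budget (factor |D_j| = 0) nor to the
   objective. *)
Section Portfolio.
Variables (R : rcfType) (J : nat) (A : finType) (port : A -> 'I_J)
  (sig : A -> R) (d : 'I_J -> nat) (sD : 'I_J -> R) (C : R) (V : 'I_J -> R).

Definition gamma (j : 'I_J) : R :=
  sD j * Num.sqrt (d j)%:R + \sum_(a | port a == j) sig a.

Definition eps (j : 'I_J) : R := gamma j / V j.

Definition alpha (B : {set 'I_J}) : R :=
  (C - \sum_(j in B) gamma j * eps j) / \sum_(j | j \notin B) gamma j.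

Definition e (B : {set 'I_J}) (j : 'I_J) : R :=
  if j \in B then eps j else alpha B.

Definition rstar (B : {set 'I_J}) (j : 'I_J) : R :=
  sD j / Num.sqrt (d j)%:R * e B j.
Definition Rstar (B : {set 'I_J}) (a : A) : R := sig a * e B (port a).

Definition var (r : 'I_J -> R) (Rv : A -> R) (j : 'I_J) : R :=
  (if d j == 0%N then 0 else sD j ^+ 2 / r j)
  + \sum_(a | port a == j) sig a ^+ 2 / Rv a.

Definition objective (r : 'I_J -> R) (Rv : A -> R) : R := \sum_j var r Rv j.

(* Feasible set.  R_i > 0; r_j > 0 whenever it carries variance
   (sD j > 0); when sD j = 0 the closure value r_j = 0 is admitted. *)
Definition feasible (r : 'I_J -> R) (Rv : A -> R) : Prop :=
  [/\ forall a, 0 < Rv a,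
      forall j, (0 < d j)%N -> 0 <= r j /\ (0 < sD j -> 0 < r j),
      \sum_j r j * (d j)%:R + \sum_a Rv a = C
    & forall j, var r Rv j <= V j].

Definition global_minimiser (r : 'I_J -> R) (Rv : A -> R) : Prop :=
  feasible r Rv /\
  forall r' Rv', feasible r' Rv' -> objective r Rv <= objective r' Rv'.

Definition alg_step (B : {set 'I_J}) : {set 'I_J} :=
  B :|: [set j | V j < var (rstar B) (Rstar B) j].

Definition alg_iter (n : nat) : {set 'I_J} := iter n alg_step set0.

Definition terminates_at (n : nat) : Prop :=
  (forall k, (k < n)%N -> alg_step (alg_iter k) != alg_iter k)
  /\ alg_step (alg_iter n) = alg_iter n.

End Portfolio.

From HB Require Import structures.
From mathcomp Require Import all_boot all_order all_algebra ring lra.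
Set Implicit Arguments. Unset Strict Implicit. Unset Printing Implicit Defensive.
Import Order.TTheory GRing.Theory Num.Theory.
Local Open Scope ring_scope.

(* Each pass of the algorithm only adds portfolios j with alpha(B) < eps_j, and
   adding them can only decrease alpha; hence B stays an "active set" in which
   alpha(B) <= eps_j for all j in B, and the complement of B keeps positive
   weight.  B grows strictly until the loop stops, so at most J passes occur.

   At the stationary B, put e_j := e_j(B) >= alpha := alpha(B) > 0.  Then
   R*(B) is feasible and spends the budget as sum_j gamma_j e_j = C.  For any
   feasible allocation the tangent-line bound c^2/x >= (2 c e - x e^2)/e^2
   gives e_j^2 Var_j >= 2 gamma_j e_j - (budget spent on j), and Var_j <= V_j
   turns this into alpha^2 Var_j >= e_j^2 Var_j - (e_j^2 - alpha^2) V_j.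
   Summing, alpha^2 times the objective is at least
   C - sum_j (e_j^2 - alpha^2) V_j, which is alpha^2 times the objective at
   R*(B): a weak-duality argument with multipliers e_j^2 - alpha^2. *)

Lemma iter_inflationary_fixpoint (T : finType) (f : {set T} -> {set T})
    (X : {set T}) :
  (forall B : {set T}, B \subset f B) ->
  exists n, (forall k, (k < n)%N -> f (iter k f X) != iter k f X)
            /\ f (iter n f X) = iter n f X.
Proof.
move=> f_incr; pose fixed k := f (iter k f X) == iter k f X.
have card_iter k :
    (forall i, (i < k)%N -> ~~ fixed i) -> (k <= #|iter k f X|)%N.
  elim: k => [//|k IHk] not_fixed.
  apply: leq_ltn_trans (IHk (fun i lt_ik => not_fixed i (ltnW lt_ik))) _.
  by apply: proper_card; rewrite properEneq eq_sym not_fixed ?f_incr.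
have [n fixed_n] : exists n, fixed n.
  case: (boolP [exists k : 'I_#|T|.+1, fixed k]) => [/existsP [k]|].
    by exists k.
  rewrite negb_exists => /forallP not_fixed.
  have := card_iter #|T|.+1 (fun i lt_iT => not_fixed (Ordinal lt_iT)).
  by rewrite ltnNge max_card.
case: (ex_minnP (ex_intro fixed n fixed_n)) => m /eqP fixed_m min_m.
exists m; split=> // k lt_km; apply/negP => fixed_k.
by have := min_m k fixed_k; rewrite leqNgt lt_km.
Qed.

Lemma ler_tangent_sqr_div (R : realFieldType) (c x k t : R) :
  0 <= c -> 0 <= x -> (0 < c -> 0 < x) ->
  (c * t * k) *+ 2 - x * k ^+ 2 <= t ^+ 2 * (c ^+ 2 / x).
Proof.
move=> c_ge0 x_ge0 x_gt0.
have [->|c_gt0] := eqVneq c 0.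
  by rewrite !(mul0r, expr0n) /= mul0rn sub0r mulr0 oppr_le0 mulr_ge0 ?sqr_ge0.
have {}x_gt0 : 0 < x by apply: x_gt0; rewrite lt_def c_gt0.
rewrite mulrA ler_pdivlMr // mulr2n.
have : 0 <= (c * t - x * k) ^+ 2 by rewrite sqr_ge0.
nra.
Qed.

Section Allocation.
Variables (R : rcfType) (J : nat) (A : finType) (port : A -> 'I_J)
  (sig : A -> R) (d : 'I_J -> nat) (sD : 'I_J -> R) (C : R) (V : 'I_J -> R).
Hypotheses (sig_gt0 : forall a, 0 < sig a) (sD_ge0 : forall j, 0 <= sD j)
  (V_gt0 : forall j, 0 < V j)
  (slater : \sum_j gamma port sig d sD j * eps port sig d sD V j < C).

Local Notation gam := (gamma port sig d sD).
Local Notation ep := (eps port sig d sD V).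
Local Notation alp := (alpha port sig d sD C V).
Local Notation eB := (e port sig d sD C V).
Local Notation varP := (var port sig d sD).
Local Notation rS := (rstar port sig d sD C V).
Local Notation RS := (Rstar port sig d sD C V).
Local Notation step := (alg_step port sig d sD C V).

Lemma gamma_ge0 j : 0 <= gam j.
Proof.
rewrite addr_ge0 ?mulr_ge0 ?sqrtr_ge0 //.
by rewrite sumr_ge0 // => a _; apply: ltW.
Qed.

Lemma eps_ge0 j : 0 <= ep j.
Proof. by rewrite divr_ge0 ?gamma_ge0 ?ltW. Qed.

Lemma slack_gt0 (B : {set 'I_J}) : 0 < C - \sum_(j in B) gam j * ep j.
Proof.
rewrite subr_gt0; apply: le_lt_trans slater.
rewrite [leRHS](bigID (mem B)) /= lerDl.
by rewrite sumr_ge0 // => j _; rewrite mulr_ge0 ?gamma_ge0 ?eps_ge0.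
Qed.

Definition e_at (B : {set 'I_J}) (x : R) (j : 'I_J) : R :=
  if j \in B then ep j else x.

Lemma sum_gamma_e_at (B : {set 'I_J}) x :
  \sum_j gam j * e_at B x j =
  \sum_(j in B) gam j * ep j + x * \sum_(j | j \notin B) gam j.
Proof.
rewrite (bigID (mem B)) /= mulr_sumr; congr (_ + _); apply: eq_bigr => j.
  by rewrite /e_at => ->.
by rewrite /e_at => /negbTE ->; rewrite mulrC.
Qed.

Lemma sum_gamma_e (B : {set 'I_J}) :
  0 < \sum_(j | j \notin B) gam j -> \sum_j gam j * eB B j = C.
Proof.
move=> free_gt0; rewrite (sum_gamma_e_at B (alp B)) /alpha.
by rewrite mulfVK ?gt_eqF // addrC subrK.
Qed.

Lemma alpha_gt0 (B : {set 'I_J}) : 0 < \sum_(j | j \notin B) gam j -> 0 < alp B.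
Proof. by move=> free_gt0; rewrite divr_gt0 ?slack_gt0. Qed.

Lemma alpha_superset (B B' : {set 'I_J}) :
  0 < \sum_(j | j \notin B) gam j -> B \subset B' ->
  (forall j, j \in B' -> j \notin B -> alp B <= ep j) ->
  0 < \sum_(j | j \notin B') gam j /\ alp B' <= alp B.
Proof.
move=> free_gt0 sBB' le_new.
have : C <= \sum_(j in B') gam j * ep j + alp B * \sum_(j | j \notin B') gam j.
  rewrite -sum_gamma_e_at -{1}(sum_gamma_e free_gt0); apply: ler_sum => j _.
  rewrite ler_wpM2l ?gamma_ge0 // /e /e_at.
  have [jB|jNB] := boolP (j \in B); first by rewrite (subsetP sBB').
  by case: ifPn => [jB'|_]; [exact: le_new|].
rewrite -lerBlDl => slack_le.
have free'_gt0 : 0 < \sum_(j | j \notin B') gam j.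
  rewrite -(pmulr_rgt0 _ (alpha_gt0 free_gt0)).
  exact: lt_le_trans (slack_gt0 B') slack_le.
by split=> //; rewrite ler_pdivrMr.
Qed.

Lemma var_star (B : {set 'I_J}) j : varP (rS B) (RS B) j = gam j / eB B j.
Proof.
rewrite mulrDl; congr (_ + _).
  case: eqP => [->|_]; first by rewrite sqrtr0 mulr0 mul0r.
  have [->|sD_neq0] := eqVneq (sD j) 0; first by rewrite expr0n !mul0r.
  by rewrite !invfM invrK expr2 !mulrA mulfK.
rewrite mulr_suml; apply: eq_bigr => a /eqP port_a.
by rewrite /Rstar port_a invfM expr2 mulrA mulfK ?gt_eqF.
Qed.

Definition budget (r : 'I_J -> R) (Rv : A -> R) (j : 'I_J) : R :=
  r j * (d j)%:R + \sum_(a | port a == j) Rv a.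

Lemma sum_budget (r : 'I_J -> R) (Rv : A -> R) :
  \sum_j r j * (d j)%:R + \sum_a Rv a = \sum_j budget r Rv j.
Proof. by rewrite (partition_big port xpredT) // -big_split. Qed.

Lemma budget_star (B : {set 'I_J}) j : budget (rS B) (RS B) j = gam j * eB B j.
Proof.
rewrite mulrDl mulr_suml; congr (_ + _); last first.
  by apply: eq_bigr => a /eqP port_a; rewrite /Rstar port_a.
have [->|d_neq0] := eqVneq (d j) 0%N; first by rewrite sqrtr0 !(mulr0, mul0r).
set s := Num.sqrt _.
have s_neq0 : s != 0 by rewrite sqrtr_eq0 -ltNge ltr0n lt0n.
rewrite -(sqr_sqrtr (ler0n R (d j))) -/s /rstar -/s.
by field.
Qed.

Lemma mem_alg_step (B : {set 'I_J}) j :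
  (j \in step B) = (j \in B) || (V j < gam j / eB B j).
Proof. by rewrite in_setU inE var_star. Qed.

Lemma subset_alg_step (B : {set 'I_J}) : B \subset step B.
Proof. exact: subsetUl. Qed.

Definition valid_active_set (B : {set 'I_J}) : Prop :=
  (forall j, j \in B -> 0 < gam j /\ alp B <= ep j)
  /\ 0 < \sum_(j | j \notin B) gam j.

Lemma valid_alg_step (B : {set 'I_J}) :
  valid_active_set B -> valid_active_set (step B).
Proof.
move=> [activeB free_gt0]; have alpha_gt0B := alpha_gt0 free_gt0.
have added j : j \in step B -> j \notin B -> 0 < gam j /\ alp B < ep j.
  rewrite mem_alg_step /e => /orP[->//|] + jNB; rewrite (negbTE jNB).
  rewrite ltr_pdivlMr // => lt_V_gamma.
  have gamma_gt0 : 0 < gam j by apply: lt_trans lt_V_gamma; rewrite mulr_gt0.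
  by rewrite ltr_pdivlMr // mulrC.
have [free'_gt0 le_alpha] :
    0 < \sum_(j | j \notin step B) gam j /\ alp (step B) <= alp B.
  apply: alpha_superset (subset_alg_step B) _ => // j jB' jNB.
  by have [_ /ltW] := added j jB' jNB.
split=> // j jB'; have [jB|jNB] := boolP (j \in B).
  have [gamma_gt0 le_eps] := activeB j jB.
  by split=> //; apply: le_trans le_eps.
have [gamma_gt0 /ltW le_eps] := added j jB' jNB.
by split=> //; apply: le_trans le_eps.
Qed.

Lemma valid_alg_iter n :
  0 < \sum_j gam j -> valid_active_set (alg_iter port sig d sD C V n).
Proof.
move=> total_gt0; elim: n => [|n]; last exact: valid_alg_step.
split=> [j|]; first by rewrite in_set0.
by under eq_bigl do rewrite in_set0.
Qed.

Lemma tangent_budget_le_var (E : R) (r : 'I_J -> R) (Rv : A -> R) j :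
  (forall a, 0 < Rv a) -> ((0 < d j)%N -> 0 <= r j /\ (0 < sD j -> 0 < r j)) ->
  (gam j * E) *+ 2 - budget r Rv j <= E ^+ 2 * varP r Rv j.
Proof.
move=> Rv_gt0 r_pos; rewrite mulrDr mulrDl mulrnDl opprD addrACA.
apply: lerD.
  case: eqP => [->|/eqP d_neq0].
    by rewrite sqrtr0 !(mulr0, mul0r, mul0rn, subr0).
  have [r_ge0 r_gt0] := r_pos (etrans (lt0n _) d_neq0).
  rewrite -[in X in _ - X](sqr_sqrtr (ler0n R (d j))) mulrAC.
  exact: ler_tangent_sqr_div.
rewrite mulr_suml mulr_sumr -sumrMnl -sumrB; apply: ler_sum => a _.
have := ler_tangent_sqr_div 1 E (ltW (sig_gt0 a)) (ltW (Rv_gt0 a))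
  (fun _ => Rv_gt0 a).
by rewrite expr1n !mulr1 [_ * E]mulrC.
Qed.

Section StationaryActiveSet.
Variable B : {set 'I_J}.
Hypotheses (activeB : forall j, j \in B -> 0 < gam j /\ alp B <= ep j)
  (free_gt0 : 0 < \sum_(j | j \notin B) gam j) (fixedB : step B = B).

Lemma alpha_le_e j : alp B <= eB B j.
Proof. by rewrite /e; case: ifP => [/activeB[]|]. Qed.

Lemma var_star_le j : varP (rS B) (RS B) j <= V j.
Proof.
rewrite var_star /e; case: ifPn => [jB|jNB].
  by have [gamma_gt0 _] := activeB jB; rewrite invf_div mulrC divfK ?gt_eqF.
have : j \notin step B by rewrite fixedB.
by rewrite mem_alg_step /e (negbTE jNB) /= -leNgt.
Qed.

Lemma feasible_star : feasible port sig d sD C V (rS B) (RS B).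
Proof.
have e_gt0 j : 0 < eB B j := lt_le_trans (alpha_gt0 free_gt0) (alpha_le_e j).
split=> [a|j d_gt0||]; first by rewrite mulr_gt0.
- have sqrt_gt0 : 0 < Num.sqrt (d j)%:R :> R by rewrite sqrtr_gt0 ltr0n.
  split=> [|sD_gt0]; rewrite /rstar.
    by rewrite !mulr_ge0 ?invr_ge0 ?sD_ge0 ?ltW.
  by rewrite !mulr_gt0 ?invr_gt0.
- by rewrite sum_budget (eq_bigr _ (fun j _ => budget_star B j)) sum_gamma_e.
- exact: var_star_le.
Qed.

Lemma scaled_var_star j :
  alp B ^+ 2 * varP (rS B) (RS B) j
  = gam j * eB B j - (eB B j ^+ 2 - alp B ^+ 2) * V j.
Proof.
have alpha_neq0 := lt0r_neq0 (alpha_gt0 free_gt0).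
rewrite var_star /e.
case: ifPn => [jB|_]; last by rewrite subrr mul0r subr0; field.
have [/lt0r_neq0 gamma_neq0 _] := activeB jB.
have V_neq0 := lt0r_neq0 (V_gt0 j).
by rewrite /eps; field; rewrite V_neq0.
Qed.

Lemma scaled_var_ge (v : R) j : v <= V j ->
  eB B j ^+ 2 * v - (eB B j ^+ 2 - alp B ^+ 2) * V j <= alp B ^+ 2 * v.
Proof.
move=> v_le; rewrite lerBlDr -subr_ge0.
have -> : alp B ^+ 2 * v + (eB B j ^+ 2 - alp B ^+ 2) * V j - eB B j ^+ 2 * v
          = (eB B j ^+ 2 - alp B ^+ 2) * (V j - v) by ring.
have alpha_gt0B := alpha_gt0 free_gt0.
have e_gt0 := lt_le_trans alpha_gt0B (alpha_le_e j).
by rewrite mulr_ge0 // subr_ge0 // ler_sqr ?alpha_le_e // nnegrE ltW.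
Qed.

Lemma global_minimiser_star : global_minimiser port sig d sD C V (rS B) (RS B).
Proof.
split=> [|r Rv [Rv_gt0 r_pos budget_r var_le]]; first exact: feasible_star.
pose W j := (eB B j ^+ 2 - alp B ^+ 2) * V j.
have lower j :
    (gam j * eB B j) *+ 2 - budget r Rv j - W j <= alp B ^+ 2 * varP r Rv j.
  apply: le_trans (scaled_var_ge (var_le j)).
  by rewrite /W lerD2r; apply: tangent_budget_le_var (r_pos j).
rewrite -(ler_pM2l (exprn_gt0 2 (alpha_gt0 free_gt0))) !mulr_sumr.
rewrite (eq_bigr _ (fun j _ => scaled_var_star j)).
apply: le_trans (ler_sum _ (fun j _ => lower j)).
by rewrite !sumrB sumrMnl -sum_budget budget_r /W sum_gamma_e // mulr2n addrK.
Qed.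

End StationaryActiveSet.

End Allocation.

Theorem theorem2 (R : rcfType) (J : nat) (A : finType) (port : A -> 'I_J)
  (sig : A -> R) (d : 'I_J -> nat) (sD : 'I_J -> R) (C : R) (V : 'I_J -> R) :
  (forall a, 0 < sig a) ->
  (forall j, 0 <= sD j) ->
  0 < C ->
  (forall j, 0 < V j) ->
  0 < \sum_j gamma port sig d sD j ->
  \sum_j gamma port sig d sD j * eps port sig d sD V j < C ->
  exists n : nat,
    terminates_at port sig d sD C V n /\
    global_minimiser port sig d sD C V
      (rstar port sig d sD C V (alg_iter port sig d sD C V n))
      (Rstar port sig d sD C V (alg_iter port sig d sD C V n)).
Proof.
(* 0 < C is implied by Slater's condition. *)
move=> sig_gt0 sD_ge0 _ V_gt0 total_gt0 slater.
have [n [not_fixed fixed]] :=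
  iter_inflationary_fixpoint set0 (subset_alg_step port sig d sD C V).
exists n; split; first by split.
have [activeB free_gt0] :=
  valid_alg_iter sig_gt0 sD_ge0 V_gt0 slater n total_gt0.
exact: (global_minimiser_star sig_gt0 sD_ge0 V_gt0 slater activeB free_gt0
  fixed).
Qed.
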